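(* Let $B,B'$ be sets of vincular patterns, $p\in S_k$ and $R\subseteq[k]$. If $R$ is reversibly deletable for $p$ with respect to $B$ and also with respect to $B'$, then $R$ is reversibly deletable for $p$ with respect to $B\cup B'$.
   Context: A vincular pattern $(\sigma,X)$, $\sigma\in S_\ell$, $X\subseteq[\ell-1]$, is contained in $\pi$ if some subsequence $\pi_{i_1}\cdots\pi_{i_\ell}$ ($i_1<\dots<i_\ell$) is order-isomorphic to $\sigma$ with $i_{x+1}=i_x+1$ for $x\in X$. For $p\in S_k$ and $w\in[n]^k$ with distinct letters order-isomorphic to $p$, $S_n^B(p;w)$ is the set of $B$-avoiding $\pi\in S_n$ with $\pi_i=w_i$ ($i\le k$). $d_R(\pi)$ deletes the entries of $\pi$ in positions in $R$ and reduces to a permutation; for words $d_R(w)$ deletes $w_r$ ($r\in R$) and subtracts from each remaining $w_i$ the number of $r\in R$ with $w_r<w_i$. $R$ is reversibly deletable for $p$ w.r.t. $B$ if for every $n$ and every such $w$ with $S_n^B(p;w)\ne\emptyset$, $d_R$ restricts to a bijection $S_n^B(p;w)\to S_{n-|R|}^B(d_R(p);d_R(w))$. *)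

(* Permutations / words are 1-based value sequences (seq nat). *)
From mathcomp Require Import all_boot.
Set Implicit Arguments. Unset Strict Implicit. Unset Printing Implicit Defensive.

Definition is_perm (n : nat) (s : seq nat) : bool := perm_eq s (iota 1 n).

Definition order_iso (s t : seq nat) : Prop :=
  size s = size t /\
  forall i j, i < size s -> j < size s ->
    (nth 0 s i < nth 0 s j) = (nth 0 t i < nth 0 t j).

(* a vincular pattern (sigma, X), sigma in S_l, X a subset of [l-1] *)
Definition vpattern := (seq nat * seq nat)%type.

Definition valid_pattern (b : vpattern) : bool :=
  is_perm (size b.1) b.1 && all (fun x => (1 <= x) && (x <= (size b.1).-1)) b.2.

(* pi contains (sigma, X): an increasing index sequence (0-based positions)
   i_1 < ... < i_l with pi_{i_1}...pi_{i_l} order-isomorphic to sigma and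
   i_{x+1} = i_x + 1 for x in X (x is 1-based). *)
Definition contains (pi : seq nat) (b : vpattern) : Prop :=
  exists idx : seq nat,
    [/\ size idx = size b.1,
        sorted ltn idx,
        all (fun i => i < size pi) idx,
        order_iso [seq nth 0 pi i | i <- idx] b.1 &
        forall x, x \in b.2 -> nth 0 idx x = (nth 0 idx x.-1).+1].

Definition patset := vpattern -> Prop.

Definition avoids (B : patset) (pi : seq nat) : Prop :=
  forall b, B b -> ~ contains pi b.

Definition setU_pat (B B' : patset) : patset := fun b => B b \/ B' b.

Definition SnB (B : patset) (n : nat) (p w : seq nat) (pi : seq nat) : Prop :=
  [/\ is_perm n pi, avoids B pi &
      forall i, 1 <= i <= size w -> nth 0 pi i.-1 = nth 0 w i.-1].

(* delete the entries in (1-based) positions in R *)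
Definition del_pos (R : seq nat) (s : seq nat) : seq nat :=
  [seq nth 0 s i | i <- iota 0 (size s) & i.+1 \notin R].

Definition deleted (R : seq nat) (s : seq nat) : seq nat :=
  [seq nth 0 s i | i <- iota 0 (size s) & i.+1 \in R].

Definition reduce (s : seq nat) : seq nat :=
  [seq (count (fun y => y < x) s).+1 | x <- s].

Definition dR_perm (R : seq nat) (pi : seq nat) : seq nat :=
  reduce (del_pos R pi).

Definition dR_word (R : seq nat) (w : seq nat) : seq nat :=
  [seq x - count (fun y => y < x) (deleted R w) | x <- del_pos R w].

Definition admissible_word (n : nat) (p w : seq nat) : Prop :=
  [/\ size w = size p, uniq w, all (fun x => (1 <= x) && (x <= n)) w &
      order_iso w p].

Definition rev_deletable (B : patset) (p : seq nat) (R : seq nat) : Prop :=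
  forall (n : nat) (w : seq nat),
    admissible_word n p w ->
    (exists pi, SnB B n p w pi) ->
    [/\ (forall pi, SnB B n p w pi ->
            SnB B (n - size R) (dR_perm R p) (dR_word R w) (dR_perm R pi)),
        (forall pi1 pi2, SnB B n p w pi1 -> SnB B n p w pi2 ->
            dR_perm R pi1 = dR_perm R pi2 -> pi1 = pi2) &
        (forall tau, SnB B (n - size R) (dR_perm R p) (dR_word R w) tau ->
            exists2 pi, SnB B n p w pi & dR_perm R pi = tau)].

From mathcomp Require Import all_boot.
Set Implicit Arguments. Unset Strict Implicit. Unset Printing Implicit Defensive.

(* If R is reversibly deletable for p w.r.t. B and w.r.t. B', then for every
   admissible word w the (B u B')-avoiders with prefix w are exactly the
   permutations that are both B- and B'-avoiders with prefix w.  Hence d_R maps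
   them into the (B u B')-avoiders with prefix d_R(w) (from the two hypotheses)
   and is injective on them (already from the hypothesis for B).  For surjectivity, a target tau has
   a B-preimage q and a B'-preimage q'; both are permutations of [n] that agree
   with w on the first k positions, hence on the deleted positions R, and have
   the same image under d_R.  The heart of the proof is that such data determine
   a permutation: the deleted entries coincide, so the kept entries form
   rearrangements of the same set, and the reduction of a sequence determines
   it among its rearrangements.  Thus q = q' avoids B u B'. *)

Lemma count_lt_mono (t : seq nat) (x y : nat) : x \in t -> x < y ->
  count (fun z => z < x) t < count (fun z => z < y) t.
Proof.
move=> xt lt_xy; rewrite !(permP (perm_to_rem xt)) /= ltnn lt_xy add0n add1n ltnS.
by apply: sub_count => z /ltn_trans; apply.
Qed.

Lemma reduce_inj_perm (s t : seq nat) :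
  perm_eq s t -> reduce s = reduce t -> s = t.
Proof.
move=> st red_eq; have size_st := perm_size st.
apply: (eq_from_nth (x0 := 0)) => // i lt_is.
have := congr1 (nth 0 ^~ i) red_eq.
rewrite /reduce !(nth_map 0) -?size_st // (permP st) => -[].
have mem_si : nth 0 s i \in t by rewrite -(perm_mem st) mem_nth.
have mem_ti : nth 0 t i \in t by rewrite mem_nth // -size_st.
case: (ltngtP (nth 0 s i) (nth 0 t i)) => // lt_st count_eq.
- by have := count_lt_mono mem_si lt_st; rewrite count_eq ltnn.
- by have := count_lt_mono mem_ti lt_st; rewrite count_eq ltnn.
Qed.

Lemma del_pos_deleted_perm (R s : seq nat) :
  perm_eq (del_pos R s ++ deleted R s) s.
Proof.
rewrite /del_pos /deleted -map_cat.
rewrite (@eq_filter _ (fun i => i.+1 \in R) (predC (fun i => i.+1 \notin R))); last first.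
  by move=> i /=; rewrite negbK.
rewrite -[X in perm_eq _ X](mkseq_nth 0 s).
by apply: perm_map; rewrite perm_filterC.
Qed.

Lemma dR_perm_inj_on (R s1 s2 : seq nat) :
  perm_eq s1 s2 ->
  (forall i, i.+1 \in R -> nth 0 s1 i = nth 0 s2 i) ->
  dR_perm R s1 = dR_perm R s2 -> s1 = s2.
Proof.
move=> s12 agree_R dR_eq; have size12 := perm_size s12.
have deleted_eq : deleted R s1 = deleted R s2.
  rewrite /deleted size12; apply/eq_in_map => i.
  by rewrite mem_filter => /andP [/agree_R].
have kept_perm : perm_eq (del_pos R s1) (del_pos R s2).
  rewrite -(perm_cat2r (deleted R s1)) {2}deleted_eq.
  rewrite (perm_trans (del_pos_deleted_perm R s1)) // (perm_trans s12) //.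
  by rewrite perm_sym del_pos_deleted_perm.
have kept_eq := reduce_inj_perm kept_perm dR_eq.
apply: (eq_from_nth (x0 := 0)) => // i lt_i1.
case: (boolP (i.+1 \in R)) => [/agree_R // | iR].
move: kept_eq; rewrite /del_pos size12 => /eq_in_map; apply.
by rewrite mem_filter iR mem_iota -size12.
Qed.

(* Two permutations of [n] with prefix w agree at positions of R inside w,
   so d_R is injective on such permutations regardless of the avoided set. *)
Lemma SnB_dR_inj (B1 B2 : patset) (n : nat) (p w R pi1 pi2 : seq nat) :
  all (fun r => (1 <= r) && (r <= size w)) R ->
  SnB B1 n p w pi1 -> SnB B2 n p w pi2 ->
  dR_perm R pi1 = dR_perm R pi2 -> pi1 = pi2.
Proof.
move=> R_in_w [perm1 _ pref1] [perm2 _ pref2].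
apply: dR_perm_inj_on; first by rewrite (perm_trans perm1) // perm_sym.
move=> i /(allP R_in_w) /andP [_ le_iw].
by rewrite (pref1 i.+1) ?(pref2 i.+1) ?le_iw.
Qed.

Lemma SnB_setU (B B' : patset) (n : nat) (p w pi : seq nat) :
  SnB (setU_pat B B') n p w pi <-> SnB B n p w pi /\ SnB B' n p w pi.
Proof.
split=> [[perm_pi av pref] | [[perm_pi av pref] [_ av' _]]].
  by split; split=> // b Bb; apply: av; [left | right].
by split=> // b [/av | /av'].
Qed.

Theorem mainTheorem9 (B B' : patset) (k : nat) (p R : seq nat) :
  (forall b, B b -> valid_pattern b) ->
  (forall b, B' b -> valid_pattern b) ->
  is_perm k p ->
  uniq R -> all (fun r => (1 <= r) && (r <= k)) R ->
  rev_deletable B p R -> rev_deletable B' p R ->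
  rev_deletable (setU_pat B B') p R.
Proof.
move=> _ _ perm_p _ R_in_k delB delB' n w adm_w [pi0 /SnB_setU [pi0B pi0B']].
have R_in_w : all (fun r => (1 <= r) && (r <= size w)) R.
  by have [-> _ _ _] := adm_w; rewrite (perm_size perm_p) size_iota.
have [imB injB surjB] := delB n w adm_w (ex_intro _ pi0 pi0B).
have [imB' _ surjB'] := delB' n w adm_w (ex_intro _ pi0 pi0B').
split.
- by move=> pi /SnB_setU [piB piB']; apply/SnB_setU; split; [apply: imB | apply: imB'].
- by move=> pi1 pi2 /SnB_setU [pi1B _] /SnB_setU [pi2B _]; apply: injB.
- move=> tau /SnB_setU [tauB tauB'].
  have [q qB dR_q] := surjB _ tauB.
  have [q' q'B' dR_q'] := surjB' _ tauB'.
  have eq_qq' : q = q' by apply: SnB_dR_inj R_in_w qB q'B' _; rewrite dR_q dR_q'.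
  by exists q => //; apply/SnB_setU; split; last rewrite eq_qq'.
Qed.
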